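(* Let $L\subseteq Q$ be a dense extension of Lie algebras such that $Q$ is a multiplicatively semiprime algebra of quotients of $L$. Then for every essential ideal $I$ of $L$, the extension $I\subseteq Q$ is dense.
   Context: Lie algebras over a commutative unital ring $\Phi$. $\mathrm{ad}_x(y)=[x,y]$; $M(Q)$ is the subalgebra of $\mathrm{End}_\Phi(Q)$ generated by the identity and all $\mathrm{ad}_x$, $x\in Q$. For a Lie subalgebra $S\subseteq Q$, the extension $S\subseteq Q$ is dense if the only $\mu\in M(Q)$ with $\mu(S)=0$ is $\mu=0$. A Lie algebra is semiprime if $[I,I]\ne0$ for each nonzero ideal $I$; $Q$ is multiplicatively semiprime if $Q$ and $M(Q)$ are semiprime. An ideal $I$ of $L$ is essential if it meets every nonzero ideal of $L$ nontrivially. $\mathrm{Ann}_L(X)=\{a\in L:[a,X]=0\}$. $Q$ is an algebra of quotients of $L$ if for every nonzero $q\in Q$ there is an ideal $J$ of $L$ with $\mathrm{Ann}_L(J)=0$ and $0\ne[J,q]\subseteq L$. *)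

From mathcomp Require Import all_boot all_algebra.
Set Implicit Arguments. Unset Strict Implicit. Unset Printing Implicit Defensive.
Import GRing.Theory.
Local Open Scope ring_scope.

Section Lie.
Variables (R : comPzRingType) (V : lmodType R) (br : V -> V -> V).

Definition is_lie_bracket : Prop :=
  [/\ (forall (a : R) x y z, br (a *: x + y) z = a *: br x z + br y z),
      (forall (a : R) x y z, br x (a *: y + z) = a *: br x y + br x z),
      (forall x, br x x = 0) &
      (forall x y z, br x (br y z) + br y (br z x) + br z (br x y) = 0)].

Definition submodule (S : V -> Prop) : Prop :=
  [/\ S 0, (forall x y, S x -> S y -> S (x + y)) &
      (forall (a : R) x, S x -> S (a *: x))].

Definition lie_subalgebra (S : V -> Prop) : Prop :=
  submodule S /\ (forall x y, S x -> S y -> S (br x y)).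

Definition lie_ideal (L I : V -> Prop) : Prop :=
  [/\ submodule I, (forall x, I x -> L x) &
      (forall a x, L a -> I x -> I (br a x))].

Definition nonzero_set (S : V -> Prop) : Prop := exists x, S x /\ x <> 0.

Definition essential_ideal (L I : V -> Prop) : Prop :=
  lie_ideal L I /\
  (forall J, lie_ideal L J -> nonzero_set J -> exists x, I x /\ J x /\ x <> 0).

Definition ann_zero (L X : V -> Prop) : Prop :=
  forall a, L a -> (forall x, X x -> br a x = 0) -> a = 0.

(* Lie algebra semiprime: [I,I] <> 0 for each nonzero ideal I of Q = V.
   [I,I] is the span of brackets, nonzero iff some bracket is nonzero. *)
Definition lie_semiprime : Prop :=
  forall I, lie_ideal (fun _ => True) I -> nonzero_set I ->
  exists x y, I x /\ I y /\ br x y <> 0.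

Definition ad (x : V) : V -> V := fun y => br x y.

(* M(Q): the subalgebra of End_R(V) generated by the identity and all ad_x
   (maps are identified up to extensional equality). *)
Inductive inM : (V -> V) -> Prop :=
  | inM_id : inM id
  | inM_ad x : inM (ad x)
  | inM_zero : inM (fun _ => 0)
  | inM_add f g : inM f -> inM g -> inM (fun v => f v + g v)
  | inM_scale (a : R) f : inM f -> inM (fun v => a *: f v)
  | inM_comp f g : inM f -> inM g -> inM (fun v => f (g v))
  | inM_ext f g : inM f -> (forall v, f v = g v) -> inM g.

Definition M_ideal (I : (V -> V) -> Prop) : Prop :=
  [/\ (forall f, I f -> inM f),
      I (fun _ => 0),
      (forall f g, I f -> I g -> I (fun v => f v + g v)),
      (forall (a : R) f, I f -> I (fun v => a *: f v)) &
      (forall f g, I f -> (forall v, f v = g v) -> I g)] /\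
  ((forall f m, I f -> inM m -> I (fun v => m (f v))) /\
   (forall f m, I f -> inM m -> I (fun v => f (m v)))).

Definition M_semiprime : Prop :=
  forall I, M_ideal I -> (exists f, I f /\ exists v, f v <> 0) ->
  exists f g, I f /\ I g /\ exists v, f (g v) <> 0.

Definition mult_semiprime : Prop := lie_semiprime /\ M_semiprime.

Definition dense (S : V -> Prop) : Prop :=
  forall mu, inM mu -> (forall s, S s -> mu s = 0) -> forall v, mu v = 0.

Definition algebra_of_quotients (L : V -> Prop) : Prop :=
  forall q, q <> 0 -> exists J, lie_ideal L J /\ ann_zero L J /\
    (exists j, J j /\ br j q <> 0) /\ (forall j, J j -> L (br j q)).

End Lie.

From mathcomp Require Import all_boot all_algebra.
Set Implicit Arguments. Unset Strict Implicit. Unset Printing Implicit Defensive.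
Import GRing.Theory.
Local Open Scope ring_scope.

(* Let mu in M(Q) kill I.  The maps of M(Q) killing I form a two-sided ideal
   T of M(Q): if s kills I then s o ad_i kills the dense subalgebra L (as
   [i, L] lies in I), hence vanishes.  The same remark shows T o ad_i = 0 for
   i in I, so every ad_i o mu lies in T and is annihilated on the left by T;
   as M(Q) is semiprime this forces ad_i o mu = 0, i.e. [I, mu(Q)] = 0.  If
   q = mu v were nonzero, the quotient property gives j in L with
   0 <> [j, q] in L, and the Jacobi identity puts [j, q] in the ideal
   Ann_L(I).  Since I is essential, some 0 <> x lies in I and in Ann_L(I);
   then ad_x kills I and is annihilated by T, so ad_x = 0: x is a nonzero
   central element, contradicting the semiprimeness of Q. *)

Section LieBracket.
Variables (R : comPzRingType) (V : lmodType R) (br : V -> V -> V).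
Hypothesis Hbr : is_lie_bracket br.

Lemma brDl x y z : br (x + y) z = br x z + br y z.
Proof. by case: Hbr => Hl _ _ _; have := Hl 1 x y z; rewrite !scale1r. Qed.

Lemma brDr x y z : br x (y + z) = br x y + br x z.
Proof. by case: Hbr => _ Hr _ _; have := Hr 1 x y z; rewrite !scale1r. Qed.

Lemma br0l x : br 0 x = 0.
Proof. by apply: (addrI (br 0 x)); rewrite -brDl !addr0. Qed.

Lemma br0r x : br x 0 = 0.
Proof. by apply: (addrI (br x 0)); rewrite -brDr !addr0. Qed.

Lemma brZl (a : R) x z : br (a *: x) z = a *: br x z.
Proof. by case: Hbr => Hl _ _ _; rewrite -[a *: x]addr0 Hl br0l addr0. Qed.

Lemma brZr (a : R) x z : br x (a *: z) = a *: br x z.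
Proof. by case: Hbr => _ Hr _ _; rewrite -[a *: z]addr0 Hr br0r addr0. Qed.

Lemma brC x y : br y x = - br x y.
Proof.
case: Hbr => _ _ Hxx _; apply/eqP; rewrite -addr_eq0 addrC.
by have := Hxx (x + y); rewrite brDl !brDr !Hxx add0r addr0 => ->.
Qed.

Lemma brNr x y : br x (- y) = - br x y.
Proof. by rewrite -scaleN1r brZr scaleN1r. Qed.

Lemma br_jacobi x y z : br (br x y) z = br x (br y z) - br y (br x z).
Proof.
case: Hbr => _ _ _ Hjac; have := Hjac x y z.
rewrite [br z (br x y)]brC [br z x]brC brNr => E.
by apply/eqP; rewrite eq_sym -subr_eq0 E.
Qed.

Lemma inM_linear f : inM br f ->
  (forall a b, f (a + b) = f a + f b) /\ (forall (c : R) a, f (c *: a) = c *: f a).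
Proof.
elim=> {f} [| x | | f g _ [fD fZ] _ [gD gZ] | c f _ [fD fZ]
            | f g _ [fD fZ] _ [gD gZ] | f g _ [fD fZ] Efg].
- by [].
- by split=> *; rewrite /ad ?brDr ?brZr.
- by split=> *; rewrite ?addr0 ?scaler0.
- by split=> *; rewrite ?fD ?gD ?fZ ?gZ 1?addrACA ?scalerDr.
- by split=> *; rewrite ?fD ?fZ ?scalerDr // !scalerA mulrC.
- by split=> *; rewrite ?gD ?gZ ?fD ?fZ.
- by split=> *; rewrite -!Efg ?fD ?fZ.
Qed.

Lemma inMD f a b : inM br f -> f (a + b) = f a + f b.
Proof. by move/inM_linear=> []. Qed.

Lemma inMZ f (c : R) a : inM br f -> f (c *: a) = c *: f a.
Proof. by move/inM_linear=> []. Qed.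

Lemma inM0 f : inM br f -> f 0 = 0.
Proof. by move=> Mf; have := inMZ 0 0 Mf; rewrite !scale0r. Qed.

Lemma lie_semiprime_center_eq0 x :
  lie_semiprime br -> (forall w, br x w = 0) -> x = 0.
Proof.
move=> Qsp xZ; case: (eqVneq x 0) => // /eqP x_neq0.
pose Z y := forall w, br y w = 0.
have Z_ideal : lie_ideal br (fun _ => True) Z.
  split=> // [|a y _ Zy w]; last by rewrite [br a y]brC Zy oppr0 br0l.
  split=> [w | a b Za Zb w | c a Za w]; first exact: br0l.
    by rewrite brDl Za Zb addr0.
  by rewrite brZl Za scaler0.
have [y [z [Zy [_]]]] := Qsp Z Z_ideal (ex_intro _ x (conj xZ x_neq0)).
by rewrite Zy.
Qed.

(* A two-sided ideal T of a semiprime M(Q) meets its right annihilator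
   trivially, the intersection being an ideal of square zero. *)
Lemma M_semiprime_ideal_rann T f :
  M_semiprime br -> M_ideal br T -> T f ->
  (forall s, T s -> forall v, s (f v) = 0) -> forall v, f v = 0.
Proof.
move=> Msp [[TM T0 TD TZ Text] [TcompL TcompR]] Tf fT v.
pose B g := T g /\ forall s, T s -> forall v, s (g v) = 0.
have B_ideal : M_ideal br B.
  split; first split.
  - by move=> g [/TM].
  - by split=> // s /TM Ms v'; rewrite inM0.
  - move=> g h [Tg gT] [Th hT]; split; first exact: TD.
    by move=> s Ts v'; rewrite inMD ?gT ?hT ?addr0 //; apply: TM.
  - move=> c g [Tg gT]; split; first exact: TZ.
    by move=> s Ts v'; rewrite inMZ ?gT ?scaler0 //; apply: TM.
  - move=> g h [Tg gT] Egh; split; first exact: Text Egh.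
    by move=> s Ts v'; rewrite -Egh gT.
  split=> g m [Tg gT] Mm; split.
  - exact: TcompL.
  - move=> s Ts v'; apply: (gT (fun w => s (m w))).
    by apply: TcompR => //; apply: TM.
  - exact: TcompR.
  - by move=> s Ts v'; apply: gT.
case: (eqVneq (f v) 0) => // /eqP fv_neq0.
have Bf : exists g, B g /\ exists v, g v <> 0.
  by exists f; split; [split | exists v].
by have [g [h [[Tg _] [[_ hT] [w]]]]] := Msp B B_ideal Bf; rewrite hT.
Qed.

Section DenseIdeal.
Variables (L I : V -> Prop).
Hypotheses (L_dense : dense br L) (I_ideal : lie_ideal br L I).

Lemma lie_ideal_br_right i y : I i -> L y -> I (br i y).
Proof.
case: I_ideal => [[_ _ IZ] _ Ibr] Ii Ly.
by rewrite brC -scaleN1r; apply/IZ/Ibr.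
Qed.

Definition annM (f : V -> V) := inM br f /\ forall i, I i -> f i = 0.

Lemma annM_ad s i : annM s -> I i -> forall v, s (br i v) = 0.
Proof.
move=> [Ms sI] Ii; apply: (L_dense (inM_comp Ms (inM_ad br i))).
by move=> y Ly; apply/sI/lie_ideal_br_right.
Qed.

Lemma annM_compr s m : inM br m -> annM s -> annM (fun v => s (m v)).
Proof.
move=> Mm; elim: Mm s => {m}
  [| x | | f g Mf IHf Mg IHg | c f Mf IHf | f g _ IHf _ IHg | f g _ IHf Efg] s sI;
  case: (sI) => Ms s0.
- by [].
- split=> [|i Ii]; first exact: inM_comp Ms (inM_ad br x).
  by rewrite /ad brC -scaleN1r inMZ // (annM_ad sI Ii) scaler0.
- by split=> [|i Ii]; [exact: inM_comp Ms (inM_zero br) | rewrite inM0].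
- split=> [|i Ii]; first exact: inM_comp Ms (inM_add Mf Mg).
  by rewrite inMD // (proj2 (IHf s sI)) // (proj2 (IHg s sI)) // addr0.
- split=> [|i Ii]; first exact: inM_comp Ms (inM_scale c Mf).
  by rewrite inMZ // (proj2 (IHf s sI)) // scaler0.
- exact: (IHg _ (IHf s sI)).
- have [Msf sfI] := IHf s sI; split=> [|i Ii]; last by rewrite -Efg sfI.
  by apply: (inM_ext Msf) => v; rewrite Efg.
Qed.

Lemma annM_M_ideal : M_ideal br annM.
Proof.
split; first split.
- by move=> f [].
- by split=> [|i _]; first exact: inM_zero.
- move=> f g [Mf fI] [Mg gI]; split=> [|i Ii]; first exact: inM_add.
  by rewrite fI ?gI ?addr0.
- move=> c f [Mf fI]; split=> [|i Ii]; first exact: inM_scale.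
  by rewrite fI ?scaler0.
- move=> f g [Mf fI] Efg; split=> [|i Ii]; first exact: inM_ext Efg.
  by rewrite -Efg fI.
split=> f m [Mf fI] Mm; last exact: annM_compr.
by split=> [|i Ii]; [exact: inM_comp | rewrite fI ?inM0].
Qed.

Lemma ideal_centralizes_annM_image f :
  M_semiprime br -> inM br f -> (forall i, I i -> f i = 0) ->
  forall x, I x -> forall v, br x (f v) = 0.
Proof.
move=> Msp Mf fI x Ix.
apply: (M_semiprime_ideal_rann (f := fun v => br x (f v)) Msp annM_M_ideal).
  by split=> [|i Ii]; [exact: inM_comp (inM_ad br x) Mf | rewrite /= fI ?br0r].
by move=> s sI v; apply: annM_ad.
Qed.

Lemma ideal_centralizer_central x :
  M_semiprime br -> I x -> (forall i, I i -> br x i = 0) -> forall w, br x w = 0.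
Proof.
move=> Msp Ix xI; apply: (M_semiprime_ideal_rann (f := ad br x) Msp annM_M_ideal).
  by split; [apply: inM_ad | exact: xI].
by move=> s sI; apply: annM_ad.
Qed.

Definition annL (a : V) := L a /\ forall i, I i -> br a i = 0.

Lemma lie_ideal_annL : lie_subalgebra br L -> lie_ideal br L annL.
Proof.
case=> [[L0 LD LZ] Lbr]; split=> [|a [] //|y a Ly [La aI]].
  split=> [|a b [La aI] [Lb bI] | c a [La aI]].
  - by split=> // i _; rewrite br0l.
  - by split=> [|i Ii]; [exact: LD | rewrite brDl // aI ?bI ?addr0].
  - by split=> [|i Ii]; [exact: LZ | rewrite brZl // aI ?scaler0].
split=> [|i Ii]; first exact: Lbr.
rewrite br_jacobi aI // br0r aI ?subrr //.
by case: I_ideal => _ _; apply.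
Qed.

Lemma annL_br_centralizing j q :
  (forall i, I i -> br i q = 0) -> L j -> L (br j q) -> annL (br j q).
Proof.
move=> qI Lj Ljq; split=> // i Ii.
have Iji : I (br j i) by case: I_ideal => _ _; apply.
by rewrite br_jacobi !(brC _ q) !qI // !oppr0 br0r addr0.
Qed.

End DenseIdeal.

End LieBracket.

Theorem mainTheorem16 (R : comPzRingType) (V : lmodType R) (br : V -> V -> V)
  (L : V -> Prop) :
  is_lie_bracket br -> lie_subalgebra br L ->
  dense br L -> mult_semiprime br -> algebra_of_quotients br L ->
  forall I : V -> Prop, essential_ideal br L I -> dense br I.
Proof.
move=> Hbr Lsub Ldense [Qsp Msp] Lquot I [Iideal Iess] mu Mmu muI v.
have I_mu : forall i, I i -> br i (mu v) = 0.
  by move=> i Ii; apply: (ideal_centralizes_annM_image Hbr Ldense Iideal Msp Mmu muI).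
case: (eqVneq (mu v) 0) => // /eqP q_neq0.
have [J [[_ JL _] [_ [[j [Jj jq_neq0]] Jq]]]] := Lquot _ q_neq0.
have jq_ann := annL_br_centralizing Hbr Iideal I_mu (JL _ Jj) (Jq _ Jj).
have [x [Ix [[_ xI] x_neq0]]] :=
  Iess _ (lie_ideal_annL Hbr Iideal Lsub) (ex_intro _ _ (conj jq_ann jq_neq0)).
case: x_neq0; apply: (lie_semiprime_center_eq0 Hbr Qsp).
exact: (ideal_centralizer_central Hbr Ldense Iideal Msp Ix xI).
Qed.
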